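(* Let $d \ge 1$, $\alpha>0$, $p_0\in[1/2,1]$, and let $\mathcal{D}$ be the distribution on $\mathbb{R}^{d+1}\times\{-1,+1\}$ defined in the context, with $\eta=\alpha/\sqrt d$. Let $S_\infty$ be the $\ell_\infty$-perturbation set of radius $\epsilon=2\eta$ and $S_1$ the $\ell_1$-perturbation set of radius $\epsilon=2$. Then for every classifier $f:\mathbb{R}^{d+1}\to\{-1,+1\}$, $$\mathcal{R}^{\mathrm{avg}}_{\mathrm{adv}}(f;S_\infty,S_1)\;\ge\;\tfrac12 .$$
   Context: The distribution $\mathcal{D}$ over pairs $(\mathbf{x},y)$, $\mathbf{x}=(x_0,x_1,\dots,x_d)\in\mathbb{R}^{d+1}$, $y\in\{-1,+1\}$: $y$ is uniform on $\{-1,+1\}$; given $y$, $x_0=+y$ with probability $p_0$ and $x_0=-y$ with probability $1-p_0$; and $x_1,\dots,x_d$ are i.i.d. $\mathcal{N}(y\eta,1)$, independent of $x_0$, where $\eta=\alpha/\sqrt d$. For a set-valued perturbation model assigning to each input $\mathbf{x}$ a set $S(\mathbf{x})$ of allowed perturbed inputs, the adversarial risk of a classifier $f$ is $\mathcal{R}_{\mathrm{adv}}(f;S)=\Pr_{(\mathbf{x},y)\sim\mathcal{D}}[\exists\,\mathbf{x}'\in S(\mathbf{x}): f(\mathbf{x}')\neq y]$. The $\ell_p$-perturbation set of radius $\epsilon$ is $S(\mathbf{x})=\{\mathbf{x}+\mathbf{r}:\|\mathbf{r}\|_p\le\epsilon\}$. For perturbation sets $S_1,\dots,S_n$: $\mathcal{R}^{\mathrm{avg}}_{\mathrm{adv}}(f;S_1,\dots,S_n)=\frac1n\sum_i\mathcal{R}_{\mathrm{adv}}(f;S_i)$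 and $\mathcal{R}^{\mathrm{max}}_{\mathrm{adv}}(f;S_1,\dots,S_n)=\mathcal{R}_{\mathrm{adv}}(f;\cup_i S_i)$, where $(\cup_iS_i)(\mathbf{x})=\cup_iS_i(\mathbf{x})$. Classifiers are arbitrary measurable maps. *)

From HB Require Import structures.
From mathcomp Require Import all_boot all_order all_algebra.
From mathcomp Require Import all_classical all_reals all_analysis.

Set Implicit Arguments.
Unset Strict Implicit.
Unset Printing Implicit Defensive.
Import Order.TTheory GRing.Theory Num.Theory.
Local Open Scope classical_set_scope.
Local Open Scope ring_scope.

Section defs.
Context {R : realType}.

(* Labels y in {-1,+1} are encoded by bool: true <-> +1, false <-> -1. *)
Definition lab (y : bool) : R := if y then 1 else -1.

(* Inputs x = (x_0, x_1, ..., x_d) in R^{d+1}, as (d.+1)-tuples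
   (coordinate 0 is x_0).  The product (Borel) sigma-algebra on tuples
   is the library's one. *)
Definition input (d : nat) := (d.+1).-tuple R.

(* Iterated integral over n i.i.d. N(m,1) coordinates, i.e. integration
   against the product measure N(m,1)^{(x) n} (Fubini/Tonelli form). *)
Fixpoint gauss_iter (m : R) (n : nat) : (n.-tuple R -> \bar R) -> \bar R :=
  match n return (n.-tuple R -> \bar R) -> \bar R with
  | 0 => fun g => g [tuple]
  | n'.+1 => fun g =>
      (\int[normal_prob m 1]_(t in [set: R])
          @gauss_iter m n' (fun z => g [tuple of (t : R) :: z]))%E
  end.

Definition gauss_prod (m : R) (n : nat) (B : set (n.-tuple R)) : \bar R :=
  @gauss_iter m n (fun z => (\1_B z)%:E).

(* The distribution D on R^{d+1} x {-1,+1} as a set function: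
   y uniform; given y, x_0 = y w.p. p0 and x_0 = -y w.p. 1-p0;
   x_1..x_d i.i.d. N(y*eta, 1) independent of x_0, eta = alpha/sqrt d. *)
Definition Dist (d : nat) (alpha p0 : R) (A : set (input d * bool)) : \bar R :=
  let eta := alpha / Num.sqrt (d%:R) in
  (\sum_(y : bool)
     ((1/2 * p0)%R%:E *
        gauss_prod (lab y * eta)%R (fun z : d.-tuple R =>
                                    A ([tuple of lab y :: z], y)) +
      (1/2 * (1 - p0))%R%:E *
        gauss_prod (lab y * eta)%R (fun z : d.-tuple R =>
                                    A ([tuple of (- lab y)%R :: z], y))))%E.

(* Since the adversarial event need not
   be Borel, we take the inner probability (sup over measurable subsets),
   which coincides with D(E) whenever E is measurable (also in any
   completion of D). *)
Definition Dprob (d : nat) (alpha p0 : R) (E : set (input d * bool)) : \bar R :=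
  ereal_sup [set Dist alpha p0 A | A in
               [set A : set (input d * bool) | measurable A /\ A `<=` E]].

Definition linf_norm (n : nat) (r : n.-tuple R) : R :=
  \big[Num.max/0]_(i < n) `|tnth r i|.
Definition l1_norm (n : nat) (r : n.-tuple R) : R :=
  \sum_(i < n) `|tnth r i|.

Definition Sinf (n : nat) (eps : R) (x : n.-tuple R) : set (n.-tuple R) :=
  [set x' | exists r : n.-tuple R, linf_norm r <= eps /\
                        forall i, tnth x' i = tnth x i + tnth r i].
Definition S1 (n : nat) (eps : R) (x : n.-tuple R) : set (n.-tuple R) :=
  [set x' | exists r : n.-tuple R, l1_norm r <= eps /\
                        forall i, tnth x' i = tnth x i + tnth r i].

Definition Radv (d : nat) (alpha p0 : R) (f : input d -> bool)
  (S : input d -> set (input d)) : \bar R :=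
  Dprob alpha p0 [set xy | exists x', S xy.1 x' /\ f x' != xy.2].

Definition Radv_avg2 (d : nat) (alpha p0 : R) (f : input d -> bool)
  (Sa Sb : input d -> set (input d)) : \bar R :=
  ((1/2)%:E * (Radv alpha p0 f Sa + Radv alpha p0 f Sb))%E.

End defs.

(* Pair each sample (x0, z, y) with (-x0, z, -y), which has the same weight
   under D.  Flipping x0 (an l1 perturbation of size 2) turns the second into
   (x0, z, -y), so the l1 attack on it succeeds iff f (x0, z) = y.  Shifting
   the Gaussian features of the first by -2 eta y (an l_infty perturbation of
   size 2 eta) maps N(y eta, 1)^d onto N(-y eta, 1)^d, the law of the features
   of the second, so the l_infty attack on the first succeeds with the
   probability that f (x0, z) <> y.  The two success probabilities therefore
   add up to 1 on every pair, and the two adversarial risks to at least 1. *)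

From HB Require Import structures.
From mathcomp Require Import all_boot all_order all_algebra.
From mathcomp Require Import all_classical all_reals all_analysis.
From mathcomp Require Import measurable_realfun lra.
Set Implicit Arguments.
Unset Strict Implicit.
Unset Printing Implicit Defensive.
Import Order.TTheory GRing.Theory Num.Theory.
Local Open Scope classical_set_scope.
Local Open Scope ring_scope.

Section normal_translation.
Variable R : realType.
Local Open Scope ereal_scope.

(* [measurableTypeR R], i.e. [R] with the sigma-algebra generated by intervals,
   is the domain of [lebesgue_measure]; the casts make the pushforwards
   typecheck. *)
Lemma measurable_shift (c : R) :
  measurable_fun setT (shift c : measurableTypeR R -> measurableTypeR R).
Proof. exact: measurable_funD. Qed.

Lemma lebesgue_measure_shift (c : R) (A : set R) : measurable A ->
  pushforward lebesgue_measure (shift c : measurableTypeR R -> measurableTypeR R) A =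
  lebesgue_measure A.
Proof.
move=> mA; apply/esym/lebesgue_measure_unique => //; first exact: measurable_shift.
move=> _ _ [[a b]] /= _ <-.
rewrite /pushforward (_ : _ @^-1` _ = `](a - c)%R, (b - c)%R]%classic); last first.
  by apply/seteqP; split => x /=; rewrite !in_itv /= ltrBlDr lerBrDr.
rewrite !lebesgue_measure_itv /= !lte_fin ltrD2r.
by case: ifP => // _; rewrite -!EFinD opprB addrA subrK.
Qed.

Lemma normal_pdf_shift (m c x : R) :
  normal_pdf (m + c) 1 x = normal_pdf m 1 (x - c).
Proof. by rewrite /normal_pdf oner_eq0 /normal_fun opprD addrA addrAC. Qed.

Lemma normal_prob_shift (m c : R) (A : set R) : measurable A ->
  normal_prob (m + c) 1 A =
  pushforward (normal_prob m 1) (shift c : _ -> measurableTypeR R) A.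
Proof.
move=> mA; rewrite /pushforward /normal_prob.
have mcA : measurable (shift c @^-1` A).
  by rewrite -[X in measurable X]setTI; exact: measurable_funD.
rewrite -[in LHS](_ : shift (- c) @^-1` (shift c @^-1` A) = A); last first.
  by apply/funext => x /=; rewrite /shift subrK.
under eq_integral do rewrite normal_pdf_shift.
rewrite -(@ge0_integral_pushforward _ _ _ _ _ _ (measurable_shift (- c))
  lebesgue_measure _ (fun x => (normal_pdf m 1 x)%:E)) //.
- apply: (eq_measure_integral lebesgue_measure); first exact: measurable_shift.
  by move=> ? B mB _; exact: lebesgue_measure_shift.
- by apply/measurable_EFinP; apply: measurable_funTS; exact: measurable_normal_pdf.
- by move=> x _; rewrite lee_fin normal_pdf_ge0.
Qed.

Lemma integral_normal_prob_shift (m c : R) (phi : R -> \bar R) :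
  measurable_fun setT phi -> (forall x, 0 <= phi x) ->
  \int[normal_prob (m + c) 1]_(t in [set: R]) phi t =
  \int[normal_prob m 1]_(t in [set: R]) phi (t + c)%R.
Proof.
move=> mphi phi0.
rewrite (eq_measure_integral
  (pushforward (normal_prob m 1) (shift c : measurableTypeR R -> measurableTypeR R))).
- exact: measurable_shift.
- by move=> ?; rewrite ge0_integral_pushforward.
- by move=> ? A mA _; exact: normal_prob_shift.
Qed.
End normal_translation.

Section tuple_maps.
Context {R : realType}.

Definition shift_tuple (c : R) {n : nat} (z : n.-tuple R) : n.-tuple R :=
  map_tuple (fun t => t + c)%R z.

Lemma measurable_shift_tuple (c : R) n : measurable_fun setT (@shift_tuple c n).
Proof.
apply/measurable_fun_tnthP => i.
rewrite (_ : _ \o _ = fun z => tnth z i + c)%R; last first.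
  by apply/funext => z /=; rewrite tnth_map.
by apply: measurable_funD => //; exact: measurable_tnth.
Qed.

Lemma shift_tupleK (c : R) n : cancel (@shift_tuple c n) (shift_tuple (- c)).
Proof. by move=> z; apply: eq_from_tnth => i; rewrite !tnth_map addrK. Qed.

Definition shift_tail (c : R) {n : nat} (w : n.+1.-tuple R) : n.+1.-tuple R :=
  [tuple of thead w :: shift_tuple c [tuple of behead w]].

Definition flip_head {n : nat} (w : n.+1.-tuple R) : n.+1.-tuple R :=
  [tuple of - thead w :: [tuple of behead w]].

Lemma measurable_shift_tail (c : R) n : measurable_fun setT (@shift_tail c n).
Proof.
apply: measurable_cons; first exact: measurable_tnth.
by apply: measurableT_comp; [exact: measurable_shift_tuple|exact: measurable_behead].
Qed.

Lemma measurable_flip_head n : measurable_fun setT (@flip_head n).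
Proof.
apply: measurable_cons; last exact: measurable_behead.
by apply: measurableT_comp => //; exact: measurable_tnth.
Qed.

Lemma shift_tail_cons (c s : R) n (z : n.-tuple R) :
  shift_tail c [tuple of s :: z] = [tuple of s :: shift_tuple c z].
Proof. exact/val_inj. Qed.

Lemma flip_head_cons (s : R) n (z : n.-tuple R) :
  flip_head [tuple of s :: z] = [tuple of - s :: z].
Proof. exact/val_inj. Qed.

Lemma tnth_shift_tail (c : R) n (w : n.+1.-tuple R) i :
  tnth (shift_tail c w) i = if i == ord0 then tnth w i else tnth w i + c.
Proof.
rewrite !(tnth_nth 0); case: i => [[|k] lt_kn] /=; first by rewrite /thead (tnth_nth 0).
by rewrite (nth_map 0) ?nth_behead // size_behead size_tuple.
Qed.

Lemma tnth_flip_head n (w : n.+1.-tuple R) i :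
  tnth (flip_head w) i = if i == ord0 then - tnth w i else tnth w i.
Proof.
rewrite !(tnth_nth 0); case: i => [[|k] lt_kn] /=; first by rewrite /thead (tnth_nth 0).
by rewrite nth_behead.
Qed.
End tuple_maps.

Section gauss_iter.
Variable R : realType.
Local Open Scope ereal_scope.

Lemma measurable_cons_section n (g : n.+1.-tuple R -> \bar R) (t : R) :
  measurable_fun setT g ->
  measurable_fun setT (fun z : n.-tuple R => g [tuple of t :: z]).
Proof. by move=> mg; apply: measurableT_comp => //; exact: measurable_cons. Qed.

Lemma gauss_iter_ge0 (m : R) n (g : n.-tuple R -> \bar R) :
  (forall z, 0 <= g z) -> 0 <= gauss_iter m g.
Proof.
elim: n g => [|n IH] g g0 /=; first exact: g0.
by apply: integral_ge0 => t _; exact: IH.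
Qed.

Lemma measurable_gauss_iter (m : R) n dX (X : measurableType dX)
    (g : X * n.-tuple R -> \bar R) :
  measurable_fun setT g -> (forall p, 0 <= g p) ->
  measurable_fun setT (fun x => gauss_iter m (fun z => g (x, z))).
Proof.
elim: n dX X g => [|n IH] dX X g mg g0 /=.
  by apply: measurableT_comp => //; exact: measurable_fun_pair.
pose h (p : (X * R) * n.-tuple R) := g (p.1.1, [tuple of p.1.2 :: p.2]).
have mh : measurable_fun setT h.
  apply: measurableT_comp => //; apply: measurable_fun_pair => /=.
    exact: measurableT_comp.
  by apply: measurable_cons => //; exact: measurableT_comp.
have := IH _ _ _ mh (fun p => g0 _).
move/(measurable_fun_fubini_tonelli_F (m2 := normal_prob m 1)); apply.
by move=> p; apply: gauss_iter_ge0 => z; exact: g0.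
Qed.

Lemma measurable_gauss_iter_cons (m : R) n (g : n.+1.-tuple R -> \bar R) :
  measurable_fun setT g -> (forall z, 0 <= g z) ->
  measurable_fun setT (fun t : R => gauss_iter m (fun z => g [tuple of t :: z])).
Proof.
move=> mg g0.
have mg' : measurable_fun setT (fun p : R * n.-tuple R => g [tuple of p.1 :: p.2]).
  by apply: measurableT_comp => //; exact: (measurable_cons (f := fst) (g := snd)).
exact: (measurable_gauss_iter m mg' (fun p => g0 _)).
Qed.

Lemma gauss_iterD (m : R) n (g1 g2 : n.-tuple R -> \bar R) :
  measurable_fun setT g1 -> measurable_fun setT g2 ->
  (forall z, 0 <= g1 z) -> (forall z, 0 <= g2 z) ->
  gauss_iter m (g1 \+ g2) = gauss_iter m g1 + gauss_iter m g2.
Proof.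
elim: n g1 g2 => [|n IH] g1 g2 mg1 mg2 g10 g20 //=.
rewrite -ge0_integralD //; last 4 first.
- by move=> t _; exact: gauss_iter_ge0.
- exact: measurable_gauss_iter_cons.
- by move=> t _; exact: gauss_iter_ge0.
- exact: measurable_gauss_iter_cons.
by apply: eq_integral => t _; rewrite -IH //; exact: measurable_cons_section.
Qed.

Lemma gauss_iter1 (m : R) n : gauss_iter m (fun _ : n.-tuple R => 1) = 1.
Proof.
elim: n => [|n IH] //=; under eq_integral do rewrite IH.
by rewrite integral_cst // mul1e; exact: probability_setT.
Qed.

Lemma gauss_iter_shift (m c : R) n (g : n.-tuple R -> \bar R) :
  measurable_fun setT g -> (forall z, 0 <= g z) ->
  gauss_iter (m + c)%R g = gauss_iter m (g \o shift_tuple c).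
Proof.
elim: n g => [|n IH] g mg g0 /=; first by congr g; exact/val_inj.
transitivity (\int[normal_prob (m + c)%R 1]_(t in [set: R])
    gauss_iter m (fun z => (g \o shift_tail c) [tuple of t :: z])).
  apply: eq_integral => t _; rewrite IH /=; last 2 first.
  - exact: measurable_cons_section.
  - by move=> z; exact: g0.
  by congr gauss_iter; apply/funext => z /=; rewrite shift_tail_cons.
rewrite integral_normal_prob_shift; last 2 first.
- apply: measurable_gauss_iter_cons => [|w]; last exact: g0.
  by apply: measurableT_comp => //; exact: measurable_shift_tail.
- by move=> t; apply: gauss_iter_ge0 => z; exact: g0.
apply: eq_integral => t _; congr gauss_iter; apply/funext => z /=.
by rewrite shift_tail_cons; congr g; exact/val_inj.
Qed.

Lemma measurable_indic_EFin dT (T : measurableType dT) (B : set T) : measurable B ->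
  measurable_fun setT (fun z => (\1_B z : R)%:E).
Proof. by move=> mB; apply/measurable_EFinP; exact: measurable_indic. Qed.

Lemma indic_EFin_ge0 T (B : set T) (z : T) : 0 <= (\1_B z : R)%:E.
Proof. by rewrite lee_fin indicE. Qed.

Lemma gauss_prod_ge0 (m : R) n (B : set (n.-tuple R)) : 0 <= gauss_prod m B.
Proof. by apply: gauss_iter_ge0 => z; exact: indic_EFin_ge0. Qed.

Lemma gauss_prod_shift (m c : R) n (B : set (n.-tuple R)) : measurable B ->
  gauss_prod (m + c)%R B = gauss_prod m (shift_tuple c @^-1` B).
Proof.
by move=> mB; rewrite /gauss_prod gauss_iter_shift //; exact: measurable_indic_EFin.
Qed.

Lemma gauss_prodC (m : R) n (B : set (n.-tuple R)) : measurable B ->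
  gauss_prod m (~` B) + gauss_prod m B = 1.
Proof.
move=> mB; rewrite /gauss_prod -gauss_iterD; last 4 first.
- exact: measurable_indic_EFin (measurableC mB).
- exact: measurable_indic_EFin.
- by move=> z; exact: indic_EFin_ge0.
- by move=> z; exact: indic_EFin_ge0.
rewrite -(gauss_iter1 m n); congr gauss_iter; apply/funext => z /=.
by rewrite indicC indicE; case: (z \in B); rewrite /= ?add0e ?adde0.
Qed.
End gauss_iter.

Lemma measurable_bool_sections d (X : measurableType d) (E : set (X * bool)) :
  (forall b, measurable [set x | E (x, b)]) -> measurable E.
Proof.
move=> mE; rewrite (_ : E = ([set x | E (x, true)] `*` [set true]) `|`
                           ([set x | E (x, false)] `*` [set false])).
  by apply: measurableU; exact: measurableX.
apply/seteqP; split => [[x []] Ex|[x y] [[Ex /= ->]|[Ex /= ->]]] //=.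
- by left.
- by right.
Qed.

Lemma Dist_le_Dprob (R : realType) d (alpha p0 : R) (A E : set (input d * bool)) :
  measurable A -> A `<=` E -> (Dist alpha p0 A <= Dprob alpha p0 E)%E.
Proof. by move=> mA AE; apply: ereal_sup_ubound; exists A. Qed.

Section perturbation_sets.
Variables (R : realType) (n : nat).

Definition tuple_diff (x' x : n.-tuple R) : n.-tuple R :=
  [tuple tnth x' i - tnth x i | i < n].

Lemma mem_Sinf (eps : R) (x x' : n.-tuple R) : 0 <= eps ->
  (forall i, `|tnth x' i - tnth x i| <= eps) -> Sinf eps x x'.
Proof.
move=> eps0 le_eps; exists (tuple_diff x' x); split.
  by apply: bigmax_le => // i _; rewrite tnth_mktuple.
by move=> i; rewrite tnth_mktuple addrC subrK.
Qed.

Lemma mem_S1 (eps : R) (x x' : n.-tuple R) :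
  \sum_(i < n) `|tnth x' i - tnth x i| <= eps -> S1 eps x x'.
Proof.
move=> le_eps; exists (tuple_diff x' x); split.
  by rewrite /l1_norm; under eq_bigr do rewrite tnth_mktuple.
by move=> i; rewrite tnth_mktuple addrC subrK.
Qed.
End perturbation_sets.

Lemma lab_negb {R : realType} (y : bool) : lab (~~ y) = - lab y :> R.
Proof. by case: y; rewrite /lab ?opprK. Qed.

Lemma lab_sign {R : realType} (y : bool) : lab y = 1 :> R \/ lab y = -1 :> R.
Proof. by case: y; [left|right]. Qed.

Lemma weighted_pairs_sum (R : realType) (w1 w2 : R) (a a' b b' : \bar R) :
  (0 <= a)%E -> (0 <= b)%E -> (0 <= a')%E -> (0 <= b')%E ->
  (a + b = 1)%E -> (a' + b' = 1)%E ->
  (w1%:E * a + w2%:E * a' + (w1%:E * b + w2%:E * b'))%E = (w1 + w2)%:E.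
Proof.
move=> a0 b0 a'0 b'0 ab a'b'.
by rewrite addeACA -!ge0_muleDr // ab a'b' !mule1 -EFinD.
Qed.

Section adversarial_events.
Variables (R : realType) (d : nat) (f : @input R d -> bool).
Hypothesis mf : measurable_fun setT f.

Definition linf_event (eta : R) : set (@input R d * bool) :=
  [set xy | f (shift_tail (- (lab xy.2 * (2 * eta))) xy.1) = ~~ xy.2].

Definition l1_event : set (@input R d * bool) :=
  [set xy | (thead xy.1 = 1 \/ thead xy.1 = -1) /\ f (flip_head xy.1) = ~~ xy.2].

Lemma measurable_linf_event eta : measurable (linf_event eta).
Proof.
apply: measurable_bool_sections => b.
change (measurable ((f \o shift_tail (- (lab b * (2 * eta)))) @^-1` [set ~~ b])).
rewrite -[X in measurable X]setTI.
by apply: (measurableT_comp mf) => //; exact: measurable_shift_tail.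
Qed.

Lemma measurable_l1_event : measurable l1_event.
Proof.
apply: measurable_bool_sections => b; apply: measurableI.
  change (measurable ((fun x : @input R d => thead x) @^-1` ([set 1] `|` [set -1]))).
  rewrite -[X in measurable X]setTI.
  by apply: (measurable_tnth ord0) => //; exact: measurableU.
change (measurable ((f \o flip_head) @^-1` [set ~~ b])).
rewrite -[X in measurable X]setTI.
by apply: (measurableT_comp mf) => //; exact: measurable_flip_head.
Qed.

Lemma linf_event_adversarial eta : 0 <= eta ->
  linf_event eta `<=` [set xy | exists x', Sinf (2 * eta) xy.1 x' /\ f x' != xy.2].
Proof.
move=> eta0 [x y] /= fx; exists (shift_tail (- (lab y * (2 * eta))) x).
split; last by rewrite fx; case: (y).
apply: mem_Sinf => [|i]; first by rewrite mulr_ge0.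
rewrite tnth_shift_tail; case: ifP => _; first by rewrite subrr normr0 mulr_ge0.
have norm_lab : `|lab y| = 1 :> R by case: (y); rewrite ?normrN normr1.
by rewrite addrC addKr normrN normrM norm_lab mul1r ger0_norm ?mulr_ge0.
Qed.

Lemma l1_event_adversarial :
  l1_event `<=` [set xy | exists x', S1 2 xy.1 x' /\ f x' != xy.2].
Proof.
move=> [x y] /= [x0 fx]; exists (flip_head x); split; last by rewrite fx; case: (y).
apply: mem_S1; rewrite big_ord_recl big1 => [|i _]; last first.
  by rewrite tnth_flip_head subrr normr0.
rewrite tnth_flip_head eqxx addr0 -opprD normrN.
move: x0; rewrite /thead /= ler_norml => -[] ->; apply/andP; split; lra.
Qed.

Lemma measurable_cons_preimage (s : R) (b : bool) :
  measurable [set z : d.-tuple R | f [tuple of s :: z] = b].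
Proof.
change (measurable ((fun z : d.-tuple R => f [tuple of s :: z]) @^-1` [set b])).
rewrite -[X in measurable X]setTI.
apply: (measurableT_comp mf) => //.
exact: (measurable_cons (f := fun=> s) (g := id)).
Qed.

Lemma gauss_prod_linf_l1_complement (eta : R) (y : bool) (s : R) : s = 1 \/ s = -1 ->
  (gauss_prod (lab y * eta)%R
     [set z : d.-tuple R | linf_event eta ([tuple of s :: z], y)] +
   gauss_prod (- lab y * eta)%R
     [set z : d.-tuple R | l1_event ([tuple of (- s)%R :: z], ~~ y)] = 1)%E.
Proof.
move=> s1; set c := lab y * (2 * eta).
set B := [set z : d.-tuple R | f [tuple of s :: z] = y].
have mB : measurable B := measurable_cons_preimage s y.
have -> : [set z : d.-tuple R | l1_event ([tuple of (- s)%R :: z], ~~ y)] = B.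
  apply/funext => z; rewrite /l1_event /mkset /= flip_head_cons theadE opprK negbK.
  apply/propext; split => [[]//|fz]; split => //.
  by case: s1 => ->; rewrite ?opprK; [right|left].
have -> : [set z : d.-tuple R | linf_event eta ([tuple of s :: z], y)] =
          shift_tuple (- c) @^-1` (~` B).
  apply/funext => z; rewrite /linf_event /mkset /= shift_tail_cons.
  by apply/propext; rewrite /B /=; case: (f _); case: (y).
rewrite (_ : lab y * eta = - lab y * eta + c); last by rewrite /c; lra.
rewrite gauss_prod_shift; last first.
  rewrite -[X in measurable X]setTI.
  by apply: measurable_shift_tuple => //; exact: measurableC.
rewrite (_ : shift_tuple c @^-1` _ = ~` B); first exact: gauss_prodC.
by apply/funext => z /=; rewrite shift_tupleK.
Qed.

Lemma Dist_linf_l1_complement (alpha p0 : R) :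
  (Dist alpha p0 (linf_event (alpha / Num.sqrt d%:R)) + Dist alpha p0 l1_event = 1)%E.
Proof.
rewrite /Dist /=; set eta := alpha / Num.sqrt d%:R.
(* pair the label [y] of the l_infty event with the label [~~ y] of the l1 event *)
rewrite [X in (_ + X)%E](reindex_inj negb_inj) -big_split /=.
rewrite (eq_bigr (fun=> (1 / 2 * p0 + 1 / 2 * (1 - p0))%:E)) => [|y _].
  by rewrite sumEFin big_bool /=; congr EFin; lra.
have sign_labN : - lab y = 1 :> R \/ - lab y = -1 :> R.
  by case: (@lab_sign R y) => ->; rewrite ?opprK; [right|left].
rewrite lab_negb; apply: weighted_pairs_sum; try exact: gauss_prod_ge0.
  exact: gauss_prod_linf_l1_complement (@lab_sign R y).
exact: gauss_prod_linf_l1_complement sign_labN.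
Qed.
End adversarial_events.

Theorem theorem1 (R : realType) (d : nat) (alpha p0 : R)
  (hd : (1 <= d)%N) (halpha : 0 < alpha) (hp0 : 1/2 <= p0 <= 1)
  (f : input d -> bool) (hf : measurable_fun [set: input d] f) :
  let eta := alpha / Num.sqrt (d%:R) in
  ((1/2)%:E <= Radv_avg2 alpha p0 f (@Sinf R d.+1 (2 * eta)) (@S1 R d.+1 2))%E.
Proof.
cbv zeta; set eta := alpha / Num.sqrt d%:R.
have eta0 : 0 <= eta by rewrite divr_ge0 // ltW.
have le_linf := Dist_le_Dprob alpha p0 (measurable_linf_event hf eta)
  (linf_event_adversarial (f := f) eta0).
have le_l1 := Dist_le_Dprob alpha p0 (measurable_l1_event hf)
  (l1_event_adversarial (f := f)).
have := leeD le_linf le_l1; rewrite (Dist_linf_l1_complement hf) => le1.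
by rewrite -[X in (X <= _)%E]mule1; apply: lee_wpmul2l; rewrite ?lee_fin.
Qed.
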